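(* Let $G$ be a graph, let $S,T \subseteq V(G)$ be disjoint, and let $P^-$ and $P^+$ be the closest and farthest minimum left-restricted $(S,T)$-separators, i.e. minimum left-restricted $(S,T)$-separators such that every minimum left-restricted $(S,T)$-separator $P$ satisfies $R_G(S,P^-) \subseteq R_G(S,P) \subseteq R_G(S,P^+)$. Then for any vertex $v \in V(G)$: (1) $\lambda^{\mathrm{L}}_G(S \cup \{v\}, T) > \lambda^{\mathrm{L}}_G(S,T)$ if and only if $v \in R_G(T,P^+) \cup P^+$; (2) $\lambda^{\mathrm{L}}_G(S, T \cup \{v\}) > \lambda^{\mathrm{L}}_G(S,T)$ if and only if $v \in R_G(S,P^-)$.
   Context: For $S,T \subseteq V(G)$, a set $P \subseteq V(G)$ is an (unrestricted) $(S,T)$-separator if every path from a vertex of $S$ to a vertex of $T$ contains a vertex of $P$; it is a left-restricted $(S,T)$-separator if additionally $P \cap S = \emptyset$. $\lambda^{\mathrm{L}}_G(S,T)$ is the minimum size of a left-restricted $(S,T)$-separator, or $+\infty$ if none exists (which happens exactly when $S \cap T \neq \emptyset$). For vertex sets $X,P$, $R_G(X,P)$ denotes the set of vertices reachable in $G-P$ from at least one vertex of $X \setminus P$. (Closest and farthest minimum left-restricted separators exist when $S \cap T = \emptyset$.) *)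

From mathcomp Require Import all_boot.
From Stdlib Require Import ClassicalEpsilon.
Set Implicit Arguments. Unset Strict Implicit. Unset Printing Implicit Defensive.

(* A (finite, simple, undirected) graph: vertex type V : finType and a
   symmetric irreflexive adjacency relation e : rel V. *)

Section Sep.
Variables (V : finType) (e : rel V).

Definition separator (S T P : {set V}) : Prop :=
  forall (x : V) (p : seq V), path e x p -> x \in S -> last x p \in T ->
    has (fun y => y \in P) (x :: p).

Definition lsep (S T P : {set V}) : Prop :=
  separator S T P /\ [disjoint P & S].

Definition lsepb (S T P : {set V}) : bool :=
  if excluded_middle_informative (lsep S T P) then true else false.

(* lambda^L_G(S,T): None encodes +infinity (no left-restricted separator).
   Every left-restricted separator has size <= #|V|, so #|V| is a neutral
   default for the minimum. *)
Definition lamL (S T : {set V}) : option nat :=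
  if [exists P : {set V}, lsepb S T P]
  then Some (\big[minn/#|V|]_(P : {set V} | lsepb S T P) #|P|)
  else None.

Definition gt_ext (a b : option nat) : bool :=
  match a, b with
  | Some m, Some n => n < m
  | None, Some _ => true
  | _, None => false
  end.

Definition min_lsep (S T P : {set V}) : Prop :=
  lsep S T P /\ forall Q : {set V}, lsep S T Q -> #|P| <= #|Q|.

Definition avoid_rel (P : {set V}) : rel V :=
  [rel a b | [&& e a b, a \notin P & b \notin P]].

Definition reach (X P : {set V}) : {set V} :=
  [set y | [exists x, [&& x \in X, x \notin P & connect (avoid_rel P) x y]]].

End Sep.

From mathcomp Require Import all_boot.
From Stdlib Require Import ClassicalEpsilon.
From mathcomp Require Import zify.

Set Implicit Arguments.
Unset Strict Implicit.
Unset Printing Implicit Defensive.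

(* Write N(A) for the vertex boundary of A (the vertices outside A with a
   neighbour in A).
   Section SeparatorNumber shows that lamL S T exceeds k iff no
   left-restricted separator of size <= k exists; so both parts reduce to
   deciding whether a separator of size lambda survives enlarging S or T.
   For (2), such a separator of (S, T+v) is a minimum separator of (S,T), so
   its reach contains R(S,P^-) and misses v.  For (1), given such a separator
   Q of (S+v, T), submodularity shows that N(U), U = R(S,P^+) u R(S+v,Q), is
   a minimum (S,T)-separator; extremality of P^+ forces N(U) = P^+, and then
   v in U is neither on P^+ nor reachable from T in G - P^+.  The converse
   directions exhibit P^- (resp. P^+) as a separator of the enlarged pair. *)

Lemma disjointsP {T : finType} (A B : {set T}) :
  reflect (forall x, x \in A -> x \in B -> False) [disjoint A & B].
Proof.
rewrite -setI_eq0; apply: (iffP eqP) => [AB0 x xA xB | AB].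
  by have := in_set0 x; rewrite -AB0 inE xA xB.
by apply/setP => x; rewrite !inE; apply/andP => -[/AB].
Qed.

Section Separators.
Variables (V : finType) (e : rel V).

Definition boundary (A : {set V}) : {set V} :=
  [set z | (z \notin A) && [exists y in A, e y z]].

Lemma boundaryP (A : {set V}) z :
  reflect (z \notin A /\ exists2 y, y \in A & e y z) (z \in boundary A).
Proof.
rewrite inE; apply: (iffP andP) => -[zA].
  by case/exists_inP => y yA yz; split=> //; exists y.
by case=> y yA yz; split=> //; apply/exists_inP; exists y.
Qed.

Lemma avoid_pathE (P : {set V}) x p : x \notin P ->
  path (avoid_rel e P) x p = path e x p && all [pred z | z \notin P] p.
Proof.
elim: p x => [//|y p IH] x xP /=.
rewrite /avoid_rel /= xP /=; case yP: (y \in P); first by rewrite !andbF.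
by rewrite IH ?yP //= andbT andbA.
Qed.

Lemma reachP (X P : {set V}) y :
  reflect (exists2 x, (x \in X) && (x \notin P) & connect (avoid_rel e P) x y)
    (y \in reach e X P).
Proof.
rewrite inE; apply: (iffP existsP).
  by move=> [x /and3P[xX xP xy]]; exists x; rewrite ?xX.
by move=> [x /andP[xX xP] xy]; exists x; rewrite xX xP.
Qed.

Lemma separatorE (X T P : {set V}) :
  separator e X T P <-> [disjoint reach e X P & T].
Proof.
split=> [sepP | dis x p xp xX last_T].
  apply/disjointsP => y /reachP[x /andP[xX xP] /connectP[p xp ->]] last_T.
  move: xp; rewrite avoid_pathE // => /andP[xp /allP avoidP].
  case/hasP: (sepP x p xp xX last_T) => z; rewrite inE => /predU1P[-> | zp].
    by rewrite (negbTE xP).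
  by rewrite (negbTE (avoidP z zp)).
apply/negPn/negP; rewrite -all_predC /= => /andP[xP /allP avoidP].
have avoid_xp : path (avoid_rel e P) x p.
  by rewrite avoid_pathE // xp; apply/allP => z /avoidP.
have last_R : last x p \in reach e X P.
  by apply/reachP; exists x; rewrite ?xX //; apply/connectP; exists p.
by rewrite (disjointFr dis last_R) in last_T.
Qed.

Lemma separatorW (X T T' P : {set V}) :
  T' \subset T -> separator e X T P -> separator e X T' P.
Proof.
by move=> sT'T /separatorE dis; apply/separatorE; apply: disjointWr dis.
Qed.

Lemma sub_reach (X P : {set V}) : [disjoint P & X] -> X \subset reach e X P.
Proof.
move=> PX; apply/subsetP => x xX; apply/reachP; exists x => //.
by rewrite xX (disjointFl PX xX).
Qed.

(* G - N(A) has no edge leaving A, so nothing outside A is reached from A. *)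
Lemma reach_boundary (X A : {set V}) :
  X \subset A -> reach e X (boundary A) \subset A.
Proof.
move=> sXA; apply/subsetP => y /reachP[x /andP[/(subsetP sXA) xA _]].
case/connectP => p xp ->{y}.
elim: p x xA xp => [//|z p IH] x xA /= /andP[/and3P[xz _ zN]].
apply: IH; apply: contraNT zN => zA.
by apply/boundaryP; split=> //; exists x.
Qed.

Lemma reach_notin (X P : {set V}) y : y \in reach e X P -> y \notin P.
Proof.
case/reachP => x /andP[_ xP] /connectP[p]; rewrite avoid_pathE // => /andP[_].
move=> /allP avoidP ->; have := mem_last x p; rewrite inE.
by case/predU1P => [-> | /avoidP].
Qed.

Lemma boundary_reach (X P : {set V}) : boundary (reach e X P) \subset P.
Proof.
apply/subsetP => z /boundaryP[zR [y yR yz]]; apply: contraNT zR => zP.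
have yP := reach_notin yR; case/reachP: yR => x xXP xy.
apply/reachP; exists x => //; apply: connect_trans xy (connect1 _).
by rewrite /avoid_rel /= yz yP.
Qed.

Lemma boundary_lsep (S T A : {set V}) :
  S \subset A -> [disjoint A & T] -> lsep e S T (boundary A).
Proof.
move=> sSA AT; split.
  by apply/separatorE; apply: disjointWl AT; apply: reach_boundary.
apply/disjointsP => z /boundaryP[zA _] zS.
by rewrite (subsetP sSA z zS) in zA.
Qed.

Lemma min_lsep_boundary (S T P : {set V}) :
  min_lsep e S T P -> boundary (reach e S P) = P.
Proof.
case=> -[sepP PS] minP; apply/eqP; rewrite eqEcard boundary_reach /=.
apply: minP; apply: boundary_lsep; first exact: sub_reach.
exact/separatorE.
Qed.

Lemma boundary_submod (A B : {set V}) :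
  #|boundary (A :|: B)| + #|boundary (A :&: B)| <= #|boundary A| + #|boundary B|.
Proof.
set a := boundary A; set b := boundary B.
have sU : boundary (A :|: B) \subset (a :|: b) :\: (A :|: B).
  apply/subsetP => z /boundaryP[zAB [y yAB yz]].
  rewrite in_setD zAB in_setU; move: zAB yAB; rewrite !in_setU negb_or.
  case/andP=> zA zB /orP[yA | yB]; apply/orP; [left | right].
    by apply/boundaryP; split=> //; exists y.
  by apply/boundaryP; split=> //; exists y.
have sI : boundary (A :&: B) \subset (a :&: b) :|: (a :|: b) :&: (A :|: B).
  apply/subsetP => z /boundaryP[zAB [y yAB yz]]; move: yAB; rewrite in_setI.
  case/andP=> yA yB; rewrite in_setU !in_setI !in_setU.
  have za : z \notin A -> z \in a by move=> zA; apply/boundaryP; split=> //; exists y.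
  have zb : z \notin B -> z \in b by move=> zB; apply/boundaryP; split=> //; exists y.
  move: zAB; rewrite in_setI.
  case: (boolP (z \in A)) => zA; case: (boolP (z \in B)) => zB //= _.
  - by rewrite zb ?orbT.
  - by rewrite za ?orbT.
  - by rewrite za ?zb.
have := subset_leq_card sU; have := subset_leq_card sI.
have := cardsID (A :|: B) (a :|: b); have := cardsUI (a :&: b) ((a :|: b) :&: (A :|: B)).
have := cardsUI a b; lia.
Qed.

Lemma boundary_between (A' A U : {set V}) :
  A' \subset A -> A \subset U -> boundary A' :&: boundary U \subset boundary A.
Proof.
move=> sA'A sAU; apply/subsetP => z; rewrite in_setI.
case/andP=> /boundaryP[_ [y yA' yz]] /boundaryP[zU _].
apply/boundaryP; split; last by exists y; rewrite ?(subsetP sA'A).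
by apply: contra zU; apply: (subsetP sAU).
Qed.

Hypothesis e_sym : symmetric e.

Lemma avoid_connect_sym (P : {set V}) : connect_sym (avoid_rel e P).
Proof.
apply: sym_connect_sym => x y.
by rewrite /avoid_rel /= e_sym [(x \notin P) && _]andbC.
Qed.

Lemma reach_disjointW (X Y P : {set V}) :
  [disjoint X & reach e Y P] -> [disjoint reach e X P & Y].
Proof.
move=> dis; apply/disjointsP => y yR yY; have yP := reach_notin yR.
case/reachP: yR => x /andP[xX xP] xy.
have xR : x \in reach e Y P.
  by apply/reachP; exists y; rewrite ?yY // avoid_connect_sym.
by rewrite (disjointFr dis xX) in xR.
Qed.

Lemma reach_disjoint_sym (X Y P : {set V}) :
  [disjoint reach e X P & Y] = [disjoint X & reach e Y P].
Proof.
apply/idP/idP => [dis | /reach_disjointW //].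
by rewrite disjoint_sym; apply: reach_disjointW; rewrite disjoint_sym.
Qed.

Lemma inside_boundary (U T : {set V}) x :
  [disjoint U & T] -> x \in U -> x \notin reach e T (boundary U) :|: boundary U.
Proof.
move=> UT xU; rewrite in_setU negb_or; apply/andP; split.
  have : [disjoint reach e U (boundary U) & T].
    by apply: disjointWl UT; apply: reach_boundary.
  by rewrite reach_disjoint_sym => /disjointFr ->.
by apply/boundaryP => -[/negP].
Qed.

End Separators.

Section SeparatorNumber.
Variables (V : finType) (e : rel V).

Lemma lsepbP (S T P : {set V}) : reflect (lsep e S T P) (lsepb e S T P).
Proof. by rewrite /lsepb; case: excluded_middle_informative => sepP; constructor. Qed.

Lemma bigmin_le (S T Q : {set V}) : lsep e S T Q ->
  \big[minn/#|V|]_(P : {set V} | lsepb e S T P) #|P| <= #|Q|.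
Proof.
move/lsepbP => sepQ; have : Q \in index_enum {set V} by rewrite mem_index_enum.
elim: (index_enum _) => [//|P r IH]; rewrite inE big_cons.
case/predU1P => [<- | Qr]; first by rewrite sepQ geq_minl.
by case: ifP => _; rewrite ?geq_min IH ?orbT.
Qed.

Lemma bigmin_ge (S T : {set V}) k :
  k <= #|V| -> (forall Q, lsep e S T Q -> k <= #|Q|) ->
  k <= \big[minn/#|V|]_(P : {set V} | lsepb e S T P) #|P|.
Proof.
move=> kV kQ; apply: (big_ind (leq k)) => // [m n km kn | Q /lsepbP].
  by rewrite leq_min km kn.
exact: kQ.
Qed.

Lemma gt_lamL (S T : {set V}) k :
  gt_ext (lamL e S T) (Some k) <-> ~ exists Q, lsep e S T Q /\ #|Q| <= k.
Proof.
rewrite /lamL; case: existsP => [[P0 /lsepbP sepP0] | noP] /=; last first.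
  by split=> // _ [Q [/lsepbP sepQ _]]; apply: noP; exists Q.
split=> [lt_k [Q [sepQ Qk]] | noQ].
  by have := leq_trans lt_k (leq_trans (bigmin_le sepQ) Qk); rewrite ltnn.
apply: bigmin_ge => [| Q sepQ]; rewrite ltnNge; apply/negP => small.
  by apply: noQ; exists P0; split=> //; apply: leq_trans (max_card _) small.
by apply: noQ; exists Q.
Qed.

Lemma lamL_min (S T P : {set V}) : min_lsep e S T P -> lamL e S T = Some #|P|.
Proof.
case=> sepP minP; rewrite /lamL.
have -> : [exists P, lsepb e S T P] by apply/existsP; exists P; apply/lsepbP.
congr Some; apply/eqP; rewrite eqn_leq bigmin_le //=.
exact: bigmin_ge (max_card _) minP.
Qed.

End SeparatorNumber.

Section ExtremalSeparators.
Variables (V : finType) (e : rel V) (S T : {set V}).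

Lemma small_lsep_add_sink (Pm : {set V}) v :
  min_lsep e S T Pm ->
  (forall P, min_lsep e S T P -> reach e S Pm \subset reach e S P) ->
  (exists Q, lsep e S (T :|: [set v]) Q /\ #|Q| <= #|Pm|) <->
    v \notin reach e S Pm.
Proof.
move=> minPm closest; split=> [[Q [[sepQ QS] QPm]] | vR].
  have minQ : min_lsep e S T Q.
    split; first by split=> //; apply: separatorW sepQ; apply: subsetUl.
    by move=> R /(proj2 minPm); apply: leq_trans QPm.
  apply/negP => /(subsetP (closest Q minQ)) vRQ.
  have /separatorE RQ := sepQ.
  by have := disjointFr RQ vRQ; rewrite !inE eqxx orbT.
have [[/separatorE RT PS] _] := minPm; exists Pm; split=> //; split=> //.
apply/separatorE/disjointsP => y yR; rewrite !inE => /orP[yT | /eqP yv].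
  by rewrite (disjointFr RT yR) in yT.
by rewrite -yv yR in vR.
Qed.

Hypothesis e_sym : symmetric e.

(* Uncrossing: if some separator of (S+v, T) is as small as the farthest
   minimum separator P^+, then P^+ = N(U) for U = R(S,P^+) u R(S+v,Q), a set
   containing S+v and missing T. *)
Lemma uncross_farthest (Pp Q : {set V}) v :
  min_lsep e S T Pp ->
  (forall P, min_lsep e S T P -> reach e S P \subset reach e S Pp) ->
  lsep e (S :|: [set v]) T Q -> #|Q| <= #|Pp| ->
  exists2 U : {set V}, (S :|: [set v] \subset U) && [disjoint U & T] &
    boundary e U = Pp.
Proof.
move=> [[/separatorE AT PpS] minPp] farthest [/separatorE BT QSv] QPp.
set A := reach e S Pp; set B := reach e (S :|: [set v]) Q.
have sSA : S \subset A by apply: sub_reach.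
have sSvB : S :|: [set v] \subset B by apply: sub_reach.
have sSB : S \subset B by apply: subset_trans sSvB; apply: subsetUl.
have UT : [disjoint A :|: B & T].
  apply/disjointsP => y; rewrite in_setU => /orP[] yR yT.
    by rewrite (disjointFr AT yR) in yT.
  by rewrite (disjointFr BT yR) in yT.
have sepD := boundary_lsep e (subset_trans sSA (subsetUl A B)) UT.
have sepI : lsep e S T (boundary e (A :&: B)).
  apply: boundary_lsep; first by rewrite subsetI sSA.
  by apply: disjointWl AT; apply: subsetIl.
(* |N(A)| <= |P^+|, |N(B)| <= |Q| <= |P^+| <= |N(A & B)|, so submodularity
   bounds |N(A u B)| by lambda. *)
have DPp : #|boundary e (A :|: B)| <= #|Pp|.
  have := boundary_submod e A B; have := minPp _ sepI.
  have := subset_leq_card (boundary_reach e S Pp); rewrite -/A.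
  have := subset_leq_card (boundary_reach e (S :|: [set v]) Q); rewrite -/B.
  move: QPp; lia.
exists (A :|: B).
  by rewrite UT andbT; apply: subset_trans sSvB _; apply: subsetUr.
set D := boundary e (A :|: B).
have minD : min_lsep e S T D by split=> // R /(minPp R); apply: leq_trans DPp.
(* N(U) = N(R(S,N(U))) & N(U) <= N(A) <= P^+, as R(S,N(U)) <= A <= U. *)
apply/eqP; rewrite eqEcard minPp ?andbT; last by case: minD.
have <- : boundary e (reach e S D) :&: D = D.
  by rewrite (min_lsep_boundary minD) setIid.
apply: subset_trans (boundary_reach e S Pp).
exact: boundary_between (farthest _ minD) (subsetUl A B).
Qed.

Lemma small_lsep_add_source (Pp : {set V}) v :
  min_lsep e S T Pp ->
  (forall P, min_lsep e S T P -> reach e S P \subset reach e S Pp) ->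
  (exists Q, lsep e (S :|: [set v]) T Q /\ #|Q| <= #|Pp|) <->
    v \notin reach e T Pp :|: Pp.
Proof.
move=> minPp farthest; split=> [[Q [sepQ QPp]] | ].
  case: (uncross_farthest minPp farthest sepQ QPp) => U /andP[sSvU UT] <-.
  apply: (inside_boundary e_sym UT); apply: (subsetP sSvU).
  by rewrite !inE eqxx orbT.
rewrite in_setU negb_or => /andP[vR vPp].
have [[/separatorE RT PpS] _] := minPp; exists Pp; split=> //; split.
  apply/separatorE; rewrite reach_disjoint_sym //; apply/disjointsP => y.
  rewrite in_setU in_set1 => /orP[yS | /eqP ->]; last by rewrite (negbTE vR).
  by rewrite reach_disjoint_sym // in RT; rewrite (disjointFr RT yS).
apply/disjointsP => y yPp; rewrite in_setU in_set1 => /orP[yS | /eqP yv].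
  by rewrite (disjointFl PpS yS) in yPp.
by rewrite -yv yPp in vPp.
Qed.

End ExtremalSeparators.

Theorem lemma6 (V : finType) (e : rel V)
  (e_sym : symmetric e) (e_irr : irreflexive e)
  (S T Pm Pp : {set V}) (hST : [disjoint S & T])
  (hPm : min_lsep e S T Pm) (hPp : min_lsep e S T Pp)
  (hext : forall P : {set V}, min_lsep e S T P ->
     reach e S Pm \subset reach e S P /\ reach e S P \subset reach e S Pp)
  (v : V) :
  (gt_ext (lamL e (S :|: [set v]) T) (lamL e S T) <->
     v \in reach e T Pp :|: Pp) /\
  (gt_ext (lamL e S (T :|: [set v])) (lamL e S T) <->
     v \in reach e S Pm).
Proof.
have not_notin (b : bool) : ~ ~~ b <-> b by case: b; split=> // /(_ isT).
have closest P : min_lsep e S T P -> reach e S Pm \subset reach e S P by case/hext.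
have farthest P : min_lsep e S T P -> reach e S P \subset reach e S Pp by case/hext.
split.
  rewrite (lamL_min hPp) gt_lamL (small_lsep_add_source e_sym v hPp farthest).
  exact: not_notin.
rewrite (lamL_min hPm) gt_lamL (small_lsep_add_sink v hPm closest).
exact: not_notin.
Qed.
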